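(* In anonymous graphs of maximum degree $4$, there exists a randomized strategy (an oracle placement of quantum pebbles together with an oblivious agent's measurement-based rule), using at most a single quantum pebble at each node and $D$ quantum pebbles in total, with which the agent finds the treasure in $D$ steps with probability close to $1$, where $D$ is the length of a shortest path from the agent's starting node to the treasure. The agent needs to make $O(\log D)$ measurements at each node.
   Context: Anonymous graph: connected simple undirected graph with unlabelled, indistinguishable nodes; the edges at each node carry distinct local port numbers. An agent starts at a source node and must reach a stationary treasure node; $D$ is the shortest-path distance between them. In each round the agent learns the degree of its current node (and, here, can measure qubits emitted by a quantum pebble at that node), computes, and moves along at most one edge. The agent is oblivious: it retains no memory between rounds. A quantum pebble is a source placed at a node by an oracle (which knows the instance) that repeatedly emits qubits, all in the same quantum state unknown to the agent; the agent can perform projective single-qubit measurements in chosen orthonormal bases on as many emitted copies as it wants. *)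

From HB Require Import structures.
From mathcomp Require Import all_boot all_algebra.
From mathcomp Require Import reals complex.
Set Implicit Arguments. Unset Strict Implicit. Unset Printing Implicit Defensive.
Import GRing.Theory Num.Theory.
Local Open Scope ring_scope.

(* Nodes: a finite type V.  Node v has degree [deg v] and its incident edges
   carry the distinct local port numbers 0 .. deg v - 1; [nbr v i] is the node
   reached from v through port i. *)

Definition adj (V : finType) (deg : V -> nat) (nbr : forall v, 'I_(deg v) -> V)
  : rel V := fun u w => [exists i : 'I_(deg u), nbr u i == w].

Definition port_graph (V : finType) (deg : V -> nat)
    (nbr : forall v, 'I_(deg v) -> V) : Prop :=
  [/\ (forall v, injective (@nbr v)),                      (* no multi-edges, distinct ports *)
      (forall v i, nbr v i != v),
      (forall v i, exists j, nbr (nbr v i) j = v)          (* undirected *)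
    & (forall u w, connect (adj nbr) u w)].

Fixpoint reach (V : finType) (deg : V -> nat) (nbr : forall v, 'I_(deg v) -> V)
    (k : nat) (u w : V) : bool :=
  match k with
  | 0 => u == w
  | k'.+1 => [exists i : 'I_(deg u), reach nbr k' (nbr u i) w]
  end.

Definition is_dist (V : finType) (deg : V -> nat) (nbr : forall v, 'I_(deg v) -> V)
    (s t : V) (D : nat) : Prop :=
  reach nbr D s t /\ forall k, (k < D)%N -> ~~ reach nbr k s t.

Local Open Scope complex_scope.

Definition qvec (R : realType) := (R[i] * R[i])%type.

Definition qdot (R : realType) (u v : qvec R) : R[i] :=
  (u.1)^* * v.1 + (u.2)^* * v.2.

Definition csq (R : realType) (z : R[i]) : R :=
  let: a +i* b := z in a ^+ 2 + b ^+ 2.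

Definition qstate (R : realType) (psi : qvec R) : Prop := qdot psi psi = 1.

(* orthonormal basis of C^2 (a projective single-qubit measurement) *)
Definition qbasis (R : realType) := (qvec R * qvec R)%type.
Definition orthonormal (R : realType) (b : qbasis R) : Prop :=
  [/\ qdot b.1 b.1 = 1, qdot b.2 b.2 = 1 & qdot b.1 b.2 = 0].

(* Born rule: probability of outcome [o] (false = b.1, true = b.2) *)
Definition born (R : realType) (b : qbasis R) (o : bool) (psi : qvec R) : R :=
  csq (qdot (if o then b.2 else b.1) psi).

(* In each round the agent sees the degree d of its current node and whether a
   pebble is there.  If a pebble is there it measures [nmeas] emitted copies,
   the basis of the j-th measurement being chosen (adaptively) from d and the
   j previous outcomes; then it chooses a port (Some i) or stays (None), as a
   function of d and of the observation (None = no pebble, Some o = outcomes).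
   No memory is kept between rounds. *)
Record agent (R : realType) := Agent {
  nmeas : nat;
  meas : nat -> seq bool -> qbasis R;
  move : forall d : nat, option (seq bool) -> option 'I_d
}.

Definition valid_agent (R : realType) (A : agent R) : Prop :=
  forall d s, orthonormal (meas A d s).

Section Run.
Variables (R : realType) (V : finType) (deg : V -> nat)
  (nbr : forall v, 'I_(deg v) -> V) (t : V) (peb : V -> option (qvec R))
  (A : agent R).

Definition next (v : V) (obs : option (seq bool)) : V :=
  match move A (deg v) obs with None => v | Some i => @nbr v i end.

Definition outcome_prob (d : nat) (psi : qvec R) (o : (nmeas A).-tuple bool) : R :=
  \prod_(j < nmeas A) born (meas A d (take j o)) (tnth o j) psi.

Fixpoint succ_prob (n : nat) (v : V) : R :=
  if v == t then 1 else
  match n with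
  | 0 => 0
  | n'.+1 =>
    match peb v with
    | None => succ_prob n' (next v None)
    | Some psi => \sum_(o : (nmeas A).-tuple bool)
                     outcome_prob (deg v) psi o * succ_prob n' (next v (Some (val o)))
    end
  end.
End Run.

From Pilot Require Import Defs.
From mathcomp Require Import all_boot all_order all_algebra.
From mathcomp Require Import reals complex.
From mathcomp Require Import ring lra zify.
Set Implicit Arguments. Unset Strict Implicit. Unset Printing Implicit Defensive.
Import Order.TTheory GRing.Theory Num.Theory.
Local Open Scope ring_scope.

(* The oracle fixes a shortest path from s to t and, at each of its D nodes
   other than t, encodes the exit port (one of 0..3, as degrees are at most 4) in a
   pebble: none for port 0, |0> for port 1, |1> for port 2, |+> for port 3.
   The agent measures m copies in the computational basis and reads port 1 or 2
   when all outcomes are 0 or all are 1, and port 3 when they disagree.  Only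
   |+> can be misread, with probability 2^(1-m), so by the union bound the agent
   follows the path with probability at least 1 - D 2^(1-m), which is at least
   1 - delta when m = c (log D + 1) and 2^c > 2/delta. *)

Section Qubits.
Variable R : realType.
Local Open Scope complex_scope.

Definition ket0 : qvec R := (1, 0).
Definition ket1 : qvec R := (0, 1).
Definition ket_plus : qvec R := let h := 2^-1 +i* 2^-1 in (h, h).
Definition comp_basis : qbasis R := (ket0, ket1).

Lemma comp_basis_orthonormal : Defs.orthonormal comp_basis.
Proof. by split; rewrite /qdot /=; simpc. Qed.

Lemma qstate_ket0 : qstate ket0.
Proof. by case: comp_basis_orthonormal. Qed.

Lemma qstate_ket1 : qstate ket1.
Proof. by case: comp_basis_orthonormal. Qed.

Lemma qstate_ket_plus : qstate ket_plus.
Proof.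
rewrite /qstate /qdot /=; simpc.
by apply/eqP; rewrite eq_complex /= eqxx andbT; apply/eqP; field.
Qed.

Lemma born_ket0 o : born comp_basis o ket0 = (~~ o)%:R.
Proof. by case: o; rewrite /born /qdot /=; simpc; rewrite /csq; ring. Qed.

Lemma born_ket1 o : born comp_basis o ket1 = o%:R.
Proof. by case: o; rewrite /born /qdot /=; simpc; rewrite /csq; ring. Qed.

Lemma born_ket_plus o : born comp_basis o ket_plus = 2^-1.
Proof. by case: o; rewrite /born /qdot /=; simpc; rewrite /csq; field. Qed.

Lemma csq_ge0 (z : R[i]) : 0 <= csq z.
Proof. by case: z => a b; rewrite addr_ge0 // sqr_ge0. Qed.

End Qubits.

Definition port_of_obs (obs : option (seq bool)) : nat :=
  match obs with
  | None => 0
  | Some s => if constant s then (if head false s then 2 else 1) else 3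
  end.

Definition pebble_of_port (R : realType) (k : nat) : option (qvec R) :=
  match k with
  | 0 => None
  | 1 => Some (ket0 R)
  | 2 => Some (ket1 R)
  | _ => Some (ket_plus R)
  end.

Definition comp_agent (R : realType) (m : nat) : agent R :=
  Agent m (fun _ _ => comp_basis R) (fun d obs => insub (port_of_obs obs)).

Lemma pebble_of_port_qstate (R : realType) k psi :
  pebble_of_port R k = Some psi -> qstate psi.
Proof.
by case: k => [|[|[|k]]] //= [<-]; [apply: qstate_ket0 | apply: qstate_ket1 | apply: qstate_ket_plus].
Qed.

Section Run.
Variables (R : realType) (V : finType) (deg : V -> nat)
  (nbr : forall v, 'I_(deg v) -> V) (t : V) (peb : V -> option (qvec R))
  (A : agent R).
Arguments nbr : clear implicits.

Local Notation succ_prob := (succ_prob nbr t peb A).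
Local Notation next := (Defs.next nbr A).

Definition step_prob (v w : V) : R :=
  match peb v with
  | None => (next v None == w)%:R
  | Some psi => \sum_(o | next v (Some (val o)) == w) outcome_prob (A := A) (deg v) psi o
  end.

Lemma outcome_prob_ge0 d psi o : 0 <= outcome_prob (A := A) d psi o.
Proof. by apply: prodr_ge0 => j _; apply: csq_ge0. Qed.

Lemma succ_prob_ge0 n v : 0 <= succ_prob n v.
Proof.
elim: n v => [|n IHn] v /=; case: ifP => // _.
case: (peb v) => [psi|] //.
by apply: sumr_ge0 => o _; rewrite mulr_ge0 ?outcome_prob_ge0.
Qed.

Lemma succ_prob_step n v w :
  v != t -> step_prob v w * succ_prob n w <= succ_prob n.+1 v.
Proof.
move=> /negbTE /= ->; rewrite /step_prob; case: (peb v) => [psi|].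
  rewrite mulr_suml big_mkcond; apply: ler_sum => o _.
  by case: eqP => [-> //|_]; rewrite mulr_ge0 ?outcome_prob_ge0 ?succ_prob_ge0.
by case: eqP => [-> | _]; rewrite ?mul1r ?mul0r ?succ_prob_ge0.
Qed.

Lemma outcome_prob_le_step_prob v w psi o :
  peb v = Some psi -> next v (Some (val o)) = w ->
  outcome_prob (A := A) (deg v) psi o <= step_prob v w.
Proof.
rewrite /step_prob => -> next_o; rewrite (bigD1 o) ?next_o ?eqxx //= lerDl.
by apply: sumr_ge0 => *; apply: outcome_prob_ge0.
Qed.

Lemma succ_prob_walk (eps : R) (p : nat -> V) (D : nat) :
  p D = t -> (forall j, (j < D)%N -> p j != t /\ 1 - eps <= step_prob (p j) (p j.+1)) ->
  forall n, (n <= D)%N -> 1 - n%:R * eps <= succ_prob n (p (D - n)%N).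
Proof.
move=> pD walk; elim=> [|n IHn] nD; first by rewrite subn0 pD /= eqxx mul0r subr0.
have [p_neq_t step_ge] := walk (D - n.+1)%N (ltac:(lia)).
have := succ_prob_step n (p (D - n)%N) p_neq_t.
rewrite (_ : (D - n.+1).+1 = (D - n)%N) in step_ge; last by lia.
set q := step_prob _ _ in step_ge *; set s := succ_prob n _; set s' := succ_prob _ _.
have s_ge : 1 - n%:R * eps <= s := IHn (ltnW nD).
have s_ge0 : 0 <= s by apply: succ_prob_ge0.
have s'_ge0 : 0 <= s' by apply: succ_prob_ge0.
rewrite -natr1 mulrDl mul1r => s'_ge.
have [eps_le1|eps_gt1] := lerP eps 1; last first.
  have : 0 <= n%:R * eps by rewrite mulr_ge0 ?ler0n //; lra.
  lra.
have : 0 <= (q - (1 - eps)) * s by rewrite mulr_ge0 ?subr_ge0.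
have : 0 <= (1 - eps) * (s - (1 - n%:R * eps)) by rewrite mulr_ge0 ?subr_ge0.
have : 0 <= n%:R * eps ^+ 2 by rewrite mulr_ge0 ?ler0n ?sqr_ge0.
nra.
Qed.

End Run.

Section ShortestPath.
Variables (V : finType) (deg : V -> nat) (nbr : forall v, 'I_(deg v) -> V) (t : V).
Arguments nbr : clear implicits.

Lemma is_distS_nbr v n :
  is_dist nbr v t n.+1 -> exists i, is_dist nbr (nbr v i) t n.
Proof.
case=> /existsP [i reach_i] shortest; exists i; split => // k lt_kn.
by apply/negP => reach_k; move/negP: (shortest k.+1 lt_kn); apply; apply/existsP; exists i.
Qed.

Lemma is_dist_neq v n : is_dist nbr v t n -> (0 < n)%N -> v != t.
Proof. by case=> _ min_n /min_n. Qed.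

Lemma is_dist_uniq v a b : is_dist nbr v t a -> is_dist nbr v t b -> a = b.
Proof.
case=> reach_a min_a [reach_b min_b]; case: (ltngtP a b) => // lt_ab.
  by move: (min_b _ lt_ab); rewrite reach_a.
by move: (min_a _ lt_ab); rewrite reach_b.
Qed.

Lemma shortest_path s D : is_dist nbr s t D ->
  exists (p : nat -> V) (port : nat -> nat),
    [/\ p 0%N = s, p D = t &
    forall j, (j < D)%N -> is_dist nbr (p j) t (D - j) /\
       exists i : 'I_(deg (p j)), val i = port j /\ nbr (p j) i = p j.+1].
Proof.
elim: D s => [|D IHD] s dist_s.
  by exists (fun=> s), (fun=> 0%N); case: dist_s => /eqP.
have [i /IHD [p [port [p0 pD path_p]]]] := is_distS_nbr dist_s.
exists (fun k => if k is k'.+1 then p k' else s).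
exists (fun k => if k is k'.+1 then port k' else val i).
split=> // -[|j] lt_jD /=; first by split=> //; exists i; rewrite p0.
by rewrite subSS; apply: path_p.
Qed.

Lemma shortest_path_inj D (p : nat -> V) :
  (forall j, (j < D)%N -> is_dist nbr (p j) t (D - j)) -> {in gtn D &, injective p}.
Proof.
move=> dist_p j k; rewrite !inE => lt_jD lt_kD pjk.
have dist_pk := dist_p k lt_kD; rewrite -pjk in dist_pk.
have := is_dist_uniq (dist_p j lt_jD) dist_pk; lia.
Qed.

End ShortestPath.

Lemma card_nonconstant_tuple m :
  (2 ^ m <= #|[pred o : m.-tuple bool | ~~ constant o]| + 2)%N.
Proof.
have := cardC [pred o : m.-tuple bool | ~~ constant o].
rewrite card_tuple card_bool => <-; rewrite leq_add2l.
apply: (@leq_trans #|[set nseq_tuple m false; nseq_tuple m true]|);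
  last by rewrite cards2; case: eqP.
apply: subset_leq_card; apply/subsetP => o; rewrite !inE negbK.
case/(constantP false)=> -[] o_nseq; apply/orP; [right | left]; apply/eqP/val_inj;
  by rewrite /= o_nseq size_tuple.
Qed.

Section CompAgent.
Variables (R : realType) (m : nat).
Local Notation A := (comp_agent R m).

Lemma comp_agent_valid : valid_agent A.
Proof. by move=> d s; apply: comp_basis_orthonormal. Qed.

Lemma next_comp_agent (V : finType) (deg : V -> nat) (nbr : forall v, 'I_(deg v) -> V)
    v (i : 'I_(deg v)) obs :
  port_of_obs obs = i -> Defs.next nbr A v obs = nbr v i.
Proof. by move=> obs_i; rewrite /Defs.next /= obs_i valK. Qed.

Lemma outcome_prob_ket0 d : outcome_prob (A := A) d (ket0 R) (nseq_tuple m false) = 1.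
Proof. by apply: big1 => j _; rewrite tnth_nseq born_ket0. Qed.

Lemma outcome_prob_ket1 d : outcome_prob (A := A) d (ket1 R) (nseq_tuple m true) = 1.
Proof. by apply: big1 => j _; rewrite tnth_nseq born_ket1. Qed.

Lemma outcome_prob_ket_plus d o : outcome_prob (A := A) d (ket_plus R) o = 2^-1 ^+ m.
Proof.
by rewrite /outcome_prob (eq_bigr (fun=> 2^-1)) ?prodr_const ?card_ord // => j _;
  rewrite born_ket_plus.
Qed.

Lemma step_prob_ket_plus (V : finType) (deg : V -> nat) (nbr : forall v, 'I_(deg v) -> V)
    (peb : V -> option (qvec R)) v w :
  peb v = Some (ket_plus R) ->
  (forall o : m.-tuple bool, ~~ constant o -> Defs.next nbr A v (Some (val o)) = w) ->
  1 - 2 * 2^-1 ^+ m <= step_prob nbr peb A v w.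
Proof.
move=> peb_v next_nonconstant; rewrite /step_prob peb_v.
rewrite (eq_bigr (fun=> 2^-1 ^+ m)) => [|o _]; last exact: outcome_prob_ket_plus.
rewrite sumr_const; set P := (X in _ *+ #|X|).
have card_P : (2 ^ m <= #|P| + 2)%N.
  apply: leq_trans (card_nonconstant_tuple m) _; rewrite leq_add2r.
  by apply: subset_leq_card; apply/subsetP => o /next_nonconstant next_o; apply/eqP.
have half_pow_ge0 : (0 : R) <= 2^-1 ^+ m by rewrite exprn_ge0 ?invr_ge0 ?ler0n.
have half_pow_inv : 2^-1 ^+ m * (2 ^ m)%:R = 1 :> R.
  by rewrite natrX -exprMn mulVf ?expr1n ?pnatr_eq0.
move: card_P; rewrite -(ler_nat R) natrD => /(ler_wpM2l half_pow_ge0).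
rewrite half_pow_inv mulrDr -mulr_natr; lra.
Qed.

Lemma step_prob_pebble_of_port (V : finType) (deg : V -> nat)
    (nbr : forall v, 'I_(deg v) -> V) (peb : V -> option (qvec R)) v (i : 'I_(deg v)) :
  (0 < m)%N -> (i < 4)%N -> peb v = pebble_of_port R i ->
  1 - 2 * 2^-1 ^+ m <= step_prob nbr peb A v (nbr v i).
Proof.
move=> m_gt0 i_lt4 peb_v.
have eps_ge0 : (0 : R) <= 2 * 2^-1 ^+ m by rewrite mulr_ge0 ?exprn_ge0 ?invr_ge0 ?ler0n.
have next_i obs : port_of_obs obs = i -> Defs.next nbr A v obs = nbr v i.
  exact: next_comp_agent.
have one_le_step psi o : peb v = Some psi -> outcome_prob (A := A) (deg v) psi o = 1 ->
    port_of_obs (Some (val o)) = i -> 1 - 2 * 2^-1 ^+ m <= step_prob nbr peb A v (nbr v i).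
  move=> peb_psi prob_o port_o; have := outcome_prob_le_step_prob peb_psi (next_i _ port_o).
  rewrite prob_o; lra.
move: i_lt4 peb_v next_i one_le_step; case: (nat_of_ord i) => [|[|[|[|k]]]] //= _.
- by move=> peb_v next_i _; rewrite /step_prob peb_v next_i // eqxx lerBlDr lerDl.
- move=> peb_v _ /(_ _ (nseq_tuple m false) peb_v); apply.
    exact: outcome_prob_ket0.
  by rewrite /= constant_nseq; case: (m).
- move=> peb_v _ /(_ _ (nseq_tuple m true) peb_v); apply.
    exact: outcome_prob_ket1.
  by rewrite /= constant_nseq; case: (m) m_gt0.
- move=> peb_v next_i _; apply: step_prob_ket_plus peb_v _ => o nonconstant_o.
  by apply: next_i; rewrite /= (negbTE nonconstant_o).
Qed.

End CompAgent.

Section PathPebbles.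
Variables (R : realType) (V : finType) (D : nat) (p : nat -> V) (port : nat -> nat).

Definition path_pebbles (u : V) : option (qvec R) :=
  if [pick j : 'I_D | p j == u] is Some j then pebble_of_port R (port j) else None.

Lemma path_pebbles_qstate u psi : path_pebbles u = Some psi -> qstate psi.
Proof. by rewrite /path_pebbles; case: pickP => // j _ /pebble_of_port_qstate. Qed.

Lemma card_path_pebbles : (#|[set u | path_pebbles u != None]| <= D)%N.
Proof.
apply: (@leq_trans #|[set p (val j) | j : 'I_D]|); last first.
  by apply: leq_trans (leq_imset_card _ _) _; rewrite card_ord.
apply: subset_leq_card; apply/subsetP => u; rewrite inE /path_pebbles.
by case: pickP => // j /eqP <- _; apply/imsetP; exists j.
Qed.

Lemma path_pebbles_at j :
  {in gtn D &, injective p} -> (j < D)%N -> path_pebbles (p j) = pebble_of_port R (port j).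
Proof.
move=> p_inj lt_jD; rewrite /path_pebbles; case: pickP => [k /eqP pkj | /(_ (Ordinal lt_jD))].
  by rewrite (p_inj k j) ?inE.
by rewrite eqxx.
Qed.

End PathPebbles.

Lemma step_prob_path_pebbles (R : realType) (m : nat) (V : finType) (deg : V -> nat)
    (nbr : forall v, 'I_(deg v) -> V) (t : V) (D : nat) (p : nat -> V) (port : nat -> nat) :
  (0 < m)%N -> (forall v, (deg v <= 4)%N) ->
  (forall j, (j < D)%N -> is_dist nbr (p j) t (D - j) /\
     exists i : 'I_(deg (p j)), val i = port j /\ nbr (p j) i = p j.+1) ->
  forall j, (j < D)%N -> p j != t /\
    1 - 2 * 2^-1 ^+ m <= step_prob nbr (path_pebbles R D p port) (comp_agent R m) (p j) (p j.+1).
Proof.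
move=> m_gt0 deg_le4 path_p j lt_jD; have [dist_pj [i [port_i <-]]] := path_p j lt_jD.
split; first by apply: is_dist_neq dist_pj _; rewrite subn_gt0.
apply: step_prob_pebble_of_port => //; first exact: leq_trans (ltn_ord i) (deg_le4 _).
rewrite port_i path_pebbles_at //.
by apply: (@shortest_path_inj _ _ nbr t) => k /path_p [].
Qed.

Lemma leq_mul_pow2_trunc_log (N D : nat) :
  (D * 2 ^ N <= 2 ^ (N.+1 * (trunc_log 2 D).+1))%N.
Proof.
apply: (@leq_trans (2 ^ (trunc_log 2 D).+1 * 2 ^ N)).
  by rewrite leq_mul2r ltnW ?trunc_log_ltn ?orbT.
by rewrite -expnD leq_pexp2l //; nia.
Qed.

Lemma union_bound_le (R : realType) (delta : R) (N D : nat) :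
  0 < delta -> 2 / delta < N%:R ->
  D%:R * (2 * 2^-1 ^+ (N.+1 * (trunc_log 2 D).+1)) <= delta.
Proof.
move=> delta_gt0 N_gt; set m := (N.+1 * _)%N.
have two_lt : 2 < delta * (2 ^ N)%:R.
  have : (N%:R : R) < (2 ^ N)%:R by rewrite ltr_nat ltn_expl.
  by rewrite -ltr_pdivrMl //; lra.
have D_le : (D%:R : R) * (2 ^ N)%:R <= (2 ^ m)%:R by rewrite -natrM ler_nat leq_mul_pow2_trunc_log.
rewrite exprVn -natrX mulrA ler_pdivrMr ?ltr0n ?expn_gt0 //.
have D_ge0 : (0 : R) <= D%:R by [].
have := ler_wpM2l D_ge0 (ltW two_lt); nra.
Qed.

Theorem theorem5 :
  forall (R : realType) (delta : R), 0 < delta ->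
  exists (c : nat) (A : nat -> agent R),
    forall D : nat,
      valid_agent (A D) /\
      (nmeas (A D) <= c * (trunc_log 2 D).+1)%N /\
      forall (V : finType) (deg : V -> nat) (nbr : forall v, 'I_(deg v) -> V)
             (s t : V),
        port_graph nbr -> (forall v, (deg v <= 4)%N) -> is_dist nbr s t D ->
        exists peb : V -> option (qvec R),
          (forall v psi, peb v = Some psi -> qstate psi) /\
          (#|[set v | peb v != None]| <= D)%N /\
          1 - delta <= succ_prob nbr t peb (A D) D s.
Proof.
move=> R delta delta_gt0.
have N_gt : 2 / delta < (Num.Def.archi_bound (2 / delta))%:R.
  by apply: archi_boundP; rewrite divr_ge0 ?ltW.
set N := Num.Def.archi_bound _ in N_gt.
exists N.+1, (fun D => comp_agent R (N.+1 * (trunc_log 2 D).+1)) => D.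
split; first exact: comp_agent_valid.
split=> // V deg nbr s t _ deg_le4 dist_s.
have [p [port [p0 pD path_p]]] := shortest_path dist_s.
exists (path_pebbles R D p port); split; first exact: path_pebbles_qstate.
split; first exact: card_path_pebbles.
have m_gt0 : (0 < N.+1 * (trunc_log 2 D).+1)%N by [].
have walk := step_prob_path_pebbles R m_gt0 deg_le4 path_p.
have := succ_prob_walk pD walk (leqnn D); rewrite subnn p0.
have := union_bound_le D delta_gt0 N_gt; lra.
Qed.
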